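(* Let $q$ be a prime power, $n\ge 4$, $0\le h\le q^2-2$ and $(x,y)\in S_{\alpha^h}$. Then $$\left|\{z\in\Phi(n,q):(x,z)\in T,\ (z,y)\in T\}\right| = q^2\,|\Phi(n-2,q)|.$$ In particular (taking $h=0$) the valency of $T$ is $q^2|\Phi(n-2,q)|$.
   Context: Let $V=\mathbb{F}_{q^2}^m$ with Hermitian form $\langle x,y\rangle=\sum_k x_k y_k^{\,q}$ and $\Phi(m,q)=\{x\in\mathbb{F}_{q^2}^m\setminus\{0\}:\langle x,x\rangle=0\}$. Fix a primitive element $\alpha$ of $\mathbb{F}_{q^2}$. On $\Phi=\Phi(n,q)$ let $S_{\alpha^h}=\{(x,y)\in\Phi\times\Phi:y=\alpha^hx\}$ and $T=\{(x,y)\in\Phi\times\Phi:\langle x,y\rangle=0,\ y\notin\mathrm{Span}\{x\}\}$. *)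

From HB Require Import structures.
From mathcomp Require Import all_boot all_order all_algebra all_field.
Set Implicit Arguments. Unset Strict Implicit. Unset Printing Implicit Defensive.
Import GRing.Theory.
Local Open Scope ring_scope.

(* Hermitian form on F^m, where F = GF(q^2): <x,y> = sum_k x_k * y_k^q *)
Definition herm (F : finFieldType) (q m : nat) (x y : 'rV[F]_m) : F :=
  \sum_(k < m) x 0 k * (y 0 k) ^+ q.

Definition Phi (F : finFieldType) (q m : nat) : {set 'rV[F]_m} :=
  [set x | (x != 0) && (herm q x x == 0)].

Definition Srel (F : finFieldType) (q n : nat) (alpha : F) (h : nat)
  (x y : 'rV[F]_n) : bool :=
  [&& x \in Phi F q n, y \in Phi F q n & y == alpha ^+ h *: x].

Definition Trel (F : finFieldType) (q n : nat) (x y : 'rV[F]_n) : bool :=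
  [&& x \in Phi F q n, y \in Phi F q n, herm q x y == 0 & ~~ (y <= x)%MS].

From HB Require Import structures.
From mathcomp Require Import all_boot all_order all_algebra all_field.
From mathcomp Require Import ring zify.
Set Implicit Arguments. Unset Strict Implicit. Unset Printing Implicit Defensive.
Import GRing.Theory.
Local Open Scope ring_scope.

(* Fix an isotropic [x != 0] and [u] with [<u,x> = 1].  Every [v] is uniquely
   [w + a x + b u] with [w] orthogonal to [x] and [u], and then [<v,x> = b] and
   [<v,v> = <w,w> + a b^q + b a^q + r b^(q+1)] with [r = <u,u>].  Since the trace
   [s + s^q] is [q]-to-one onto the fixed field of Frobenius, [v] is isotropic for
   [q^2 [<w,w> = 0] + (q^2 - 1) q] pairs [(a, b)], and for [q^2 [<w,w> = 0]] pairs
   with [b = 0].  So the isotropic vectors of [x^perp] are [q^2] times the isotropic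
   vectors of [W], whose number is forced by [|F^n|] and the number of isotropic
   vectors of [F^n]: it does not depend on [x].  For [x = (1, b, 0, ..., 0)] with
   [b^(q+1) = -1] and [u = (1, 0, ..., 0)], [W] is [F^(n-2)].  Removing the [q^2]
   vectors of [Span x] leaves [q^2 |Phi(n-2)|] neighbours, and [y = alpha^h x] has
   the same [T]-neighbours as [x]. *)

Lemma card_roots_lt (F : finFieldType) (p : {poly F}) :
  p != 0 -> (#|[set s | root p s]| < size p)%N.
Proof.
move=> p0; rewrite cardE; apply: max_poly_roots => //; last exact: enum_uniq.
by apply/allP => s; rewrite mem_enum inE.
Qed.

Lemma card_fibers_eq (T U : finType) (f : T -> U) (Y : {set U}) (k : nat) :
  #|T| = (k * k)%N -> (forall t, f t \in Y) -> (#|Y| <= k)%N ->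
  (forall y, #|f @^-1: [set y]| <= k)%N ->
  forall y, y \in Y -> #|f @^-1: [set y]| = k.
Proof.
move=> cardT fY cardY fib_le y0 Yy0.
have sum_fibers : (#|T| = \sum_(y in Y) #|f @^-1: [set y]|)%N.
  rewrite -sum1_card (partition_big f (mem Y)) //=; apply: eq_bigr => y _.
  by rewrite sum1dep_card; apply: eq_card => t; rewrite !inE.
have others : (\sum_(y in Y | y != y0) #|f @^-1: [set y]| <= #|Y|.-1 * k)%N.
  apply: leq_trans (_ : \sum_(y in Y | y != y0) k <= _)%N.
    by apply: leq_sum => y _; apply: fib_le.
  rewrite sum_nat_const leq_mul2r (cardsD1 y0) Yy0 add1n /= orbC; apply/orP; left.
  by apply/eq_leq/eq_card => y; rewrite !inE andbC.
move: sum_fibers others (fib_le y0); rewrite (bigD1 y0) //= cardT.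
move: (\sum_(_ in _ | _) _)%N #|f @^-1: _| cardY => rest fiber_y0.
case: #|Y| => [|c] /=; nia.
Qed.

Lemma card_set_sum (T : finType) (P : pred T) :
  #|[set t | P t]| = (\sum_t (P t : nat))%N.
Proof. by rewrite -sum1dep_card big_mkcond; apply: eq_bigr => t _; case: (P t). Qed.

Lemma card_setI_sum (T : finType) (A B : {set T}) :
  #|A :&: B| = (\sum_(t in B) (t \in A : nat))%N.
Proof.
rewrite -sum1_card big_mkcond [RHS]big_mkcond; apply: eq_bigr => t _.
by rewrite inE andbC; case: (t \in B); case: (t \in A).
Qed.

Section HermitianCounts.
Variables (F : finFieldType) (q : nat).
Hypotheses (q_gt1 : (1 < q)%N) (card_F : #|F| = (q ^ 2)%N).
Hypothesis frobD : forall a b : F, (a + b) ^+ q = a ^+ q + b ^+ q.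

Lemma frobK (a : F) : a ^+ q ^+ q = a.
Proof. by rewrite -exprM mulnn -card_F expf_card. Qed.

Lemma frob0 : (0 : F) ^+ q = 0.
Proof. by rewrite expr0n; case: q q_gt1. Qed.

Lemma frob_eq0 (a : F) : (a ^+ q == 0) = (a == 0).
Proof. by rewrite expf_eq0; case: q q_gt1. Qed.

Lemma frobN (a : F) : (- a) ^+ q = - a ^+ q.
Proof. by apply/eqP; rewrite -addr_eq0 -frobD addNr frob0. Qed.

Lemma frob_sum I (r : seq I) (P : pred I) (G : I -> F) :
  (\sum_(i <- r | P i) G i) ^+ q = \sum_(i <- r | P i) G i ^+ q.
Proof. by apply: (big_morph (fun a => a ^+ q)); [exact: frobD | exact: frob0]. Qed.

Lemma card_frob_fixed_le : (#|[set s : F | (s ^+ q == s)%R]| <= q)%N.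
Proof.
have size_p : size ('X^q - 'X : {poly F}) = q.+1.
  by rewrite size_polyDl ?size_polyXn // size_polyN size_polyX.
rewrite -ltnS -size_p; apply: leq_ltn_trans (card_roots_lt _); last first.
  by rewrite -size_poly_eq0 size_p.
by apply/subset_leq_card/subsetP => s; rewrite !inE /root !hornerE subr_eq0.
Qed.

Lemma card_trace_fiber_le (d : F) :
  (#|[set s : F | (s + s ^+ q == d)%R]| <= q)%N.
Proof.
have size_p : size ('X^q + ('X - d%:P) : {poly F}) = q.+1.
  by rewrite size_polyDl ?size_polyXn // size_XsubC.
rewrite -ltnS -size_p; apply: leq_ltn_trans (card_roots_lt _); last first.
  by rewrite -size_poly_eq0 size_p.
apply/subset_leq_card/subsetP => s; rewrite !inE /root !hornerE.
by rewrite subr_eq0 addrC.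
Qed.

(* The trace [s + s^q] lands in the fixed field, which has at most [q] elements,
   its fibers have at most [q] elements, and there are [q^2] arguments. *)
Lemma card_trace_fiber (d : F) :
  d ^+ q = d -> #|[set s : F | s + s ^+ q == d]| = q.
Proof.
move=> dq; pose tr (s : F) := s + s ^+ q.
have fiberE (e : F) : #|tr @^-1: [set e]| = #|[set s : F | s + s ^+ q == e]|.
  by apply: eq_card => s; rewrite !inE.
rewrite -fiberE.
apply: (card_fibers_eq (Y := [set s : F | (s ^+ q == s)%R])) => [|s||e|].
- by rewrite card_F mulnn.
- by rewrite inE /tr frobD frobK addrC.
- exact: card_frob_fixed_le.
- by rewrite fiberE card_trace_fiber_le.
- by rewrite inE dq.
Qed.

Lemma count_plane_form_zeros (c r : F) : c ^+ q = c -> r ^+ q = r ->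
  (\sum_(a : F) \sum_(b : F)
     ((c + (a * b ^+ q + b * a ^+ q + b * b ^+ q * r) == 0)%R : nat)
   = q ^ 2 * (c == 0)%R + (q ^ 2 - 1) * q)%N.
Proof.
move=> cq rq; rewrite exchange_big (bigD1 (0 : F)) //=; congr (_ + _)%N.
  rewrite frob0; under eq_bigr do rewrite !(mulr0, mul0r, addr0).
  by rewrite sum_nat_const card_F.
rewrite (eq_bigr (fun _ => q)); first by rewrite sum_nat_const cardC1 card_F subn1.
move=> b b0; have bq0 : b ^+ q != 0 by rewrite frob_eq0.
(* For [b != 0], substituting [a = s / b^q] turns the equation into [s + s^q = d]. *)
rewrite (reindex (fun s => s / b ^+ q)) /=; last first.
  by exists (fun a => a * b ^+ q) => s _ /=; [exact: divfK | exact: mulfK].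
under eq_bigr => s _.
  rewrite divfK // exprMn exprVn frobK mulrCA divff // mulr1.
  have -> : (c + (s + s ^+ q + b * b ^+ q * r) == 0)
          = (s + s ^+ q == - (c + b * b ^+ q * r)).
    by rewrite -addr_eq0; congr (_ == 0); ring.
  over.
rewrite -card_set_sum card_trace_fiber //.
by rewrite frobN frobD !exprMn frobK cq rq [b ^+ q * b]mulrC.
Qed.

Section Form.
Variable n : nat.
Implicit Types x y z : 'rV[F]_n.

Lemma hermDl x y z : herm q (x + y) z = herm q x z + herm q y z.
Proof. by rewrite /herm -big_split; apply: eq_bigr => k _; rewrite mxE mulrDl. Qed.

Lemma hermDr x y z : herm q z (x + y) = herm q z x + herm q z y.
Proof. by rewrite /herm -big_split; apply: eq_bigr => k _; rewrite mxE frobD mulrDr. Qed.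

Lemma hermZl c x y : herm q (c *: x) y = c * herm q x y.
Proof. by rewrite /herm mulr_sumr; apply: eq_bigr => k _; rewrite mxE mulrA. Qed.

Lemma hermZr c x y : herm q x (c *: y) = c ^+ q * herm q x y.
Proof. by rewrite /herm mulr_sumr; apply: eq_bigr => k _; rewrite mxE exprMn mulrCA. Qed.

Lemma hermC x y : herm q y x = herm q x y ^+ q.
Proof. by rewrite /herm frob_sum; apply: eq_bigr => k _; rewrite exprMn frobK mulrC. Qed.

Lemma hermNl x y : herm q (- x) y = - herm q x y.
Proof. by rewrite -scaleN1r hermZl mulN1r. Qed.

Lemma herm0l y : herm q 0 y = 0.
Proof. by rewrite -(scale0r 0) hermZl mul0r. Qed.

Lemma herm0r y : herm q y 0 = 0.
Proof. by rewrite -(scale0r 0) hermZr frob0 mul0r. Qed.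

Lemma herm_eq0C x y : (herm q y x == 0) = (herm q x y == 0).
Proof. by rewrite hermC frob_eq0. Qed.

Lemma herm_self_frob x : herm q x x ^+ q = herm q x x.
Proof. by rewrite -hermC. Qed.
End Form.

Definition isotropic n : {set 'rV[F]_n} := [set v | herm q v v == 0].
Definition orth n (x : 'rV[F]_n) : {set 'rV[F]_n} := [set v | herm q v x == 0].

Section Decomposition.
Variables (n : nat) (x u : 'rV[F]_n).
Hypotheses (iso_x : herm q x x = 0) (u_x : herm q u x = 1).

Let r := herm q u u.
Let W := orth x :&: orth u.

Lemma herm_x_u : herm q x u = 1.
Proof. by rewrite hermC u_x expr1n. Qed.

(* The coordinates of [v = w + a x + b u] are read off from [<v,x> = b] and
   [<v,u> = a + b r]. *)
Definition decomp_join (t : 'rV[F]_n * (F * F)) := t.1 + t.2.1 *: x + t.2.2 *: u.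
Definition decomp_split (v : 'rV[F]_n) :=
  let b := herm q v x in let a := herm q v u - b * r in
  (v - a *: x - b *: u, (a, b)).

Lemma decomp_splitK v : decomp_join (decomp_split v) = v.
Proof. by rewrite /decomp_join /= -addrA [_ *: x + _]addrC addrA !subrK. Qed.

Lemma decomp_split_orth v : (decomp_split v).1 \in W.
Proof.
rewrite !inE !hermDl !hermNl !hermZl iso_x u_x herm_x_u -/r.
by apply/andP; split; apply/eqP; ring.
Qed.

Lemma herm_join_x t : t.1 \in W -> herm q (decomp_join t) x = t.2.2.
Proof.
case: t => w [a b] /setIP [/=]; rewrite inE => /eqP wx _.
by rewrite !hermDl !hermZl wx iso_x u_x mulr0 mulr1 !add0r.
Qed.

Lemma herm_join_u t : t.1 \in W -> herm q (decomp_join t) u = t.2.1 + t.2.2 * r.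
Proof.
case: t => w [a b] /setIP [/= _]; rewrite inE => /eqP wu.
by rewrite !hermDl !hermZl wu herm_x_u add0r mulr1.
Qed.

Lemma herm_join_self t : t.1 \in W ->
  herm q (decomp_join t) (decomp_join t) = herm q t.1 t.1 +
     (t.2.1 * t.2.2 ^+ q + t.2.2 * t.2.1 ^+ q + t.2.2 * t.2.2 ^+ q * r).
Proof.
case: t => w [a b] /setIP [/=]; rewrite !inE => /eqP wx /eqP wu.
have xw : herm q x w = 0 by rewrite hermC wx frob0.
have uw : herm q u w = 0 by rewrite hermC wu frob0.
rewrite /decomp_join /= !hermDl !hermDr !hermZl !hermZr.
by rewrite wx wu xw uw iso_x herm_x_u u_x -/r; ring.
Qed.

Lemma decomp_joinK t : t.1 \in W -> decomp_split (decomp_join t) = t.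
Proof.
move=> Wt; rewrite /decomp_split herm_join_x // herm_join_u // addrK.
by case: t Wt => w [a b] _; rewrite /decomp_join /= addrAC !addrK.
Qed.

Lemma sum_decomp (f : 'rV[F]_n -> nat) :
  (\sum_v f v = \sum_(w in W) \sum_(a : F) \sum_(b : F) f (decomp_join (w, (a, b))))%N.
Proof.
rewrite (reindex_onto decomp_join decomp_split) => [|v _]; last exact: decomp_splitK.
rewrite (eq_bigl (fun t => t.1 \in W)) => [|t]; last first.
  apply/eqP/idP => [<-|/decomp_joinK //]; exact: decomp_split_orth.
under [RHS]eq_bigr do rewrite pair_big /=.
rewrite pair_big_dep /=; apply: eq_big => [t | [w [a b]] _] //; by rewrite andbT.
Qed.

Lemma card_rV_decomp : (q ^ (2 * n) = #|W| * q ^ 4)%N.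
Proof.
have card_rV : #|{: 'rV[F]_n}| = (q ^ (2 * n))%N by rewrite card_mx card_F mul1n expnM.
have := sum_decomp (fun _ => 1%N); rewrite sum1_card card_rV => ->.
by rewrite !sum_nat_const card_F muln1 -expnD.
Qed.

Lemma card_isotropic_decomp :
  #|isotropic n| = (q ^ 2 * #|isotropic n :&: W| + #|W| * ((q ^ 2 - 1) * q))%N.
Proof.
rewrite /isotropic card_set_sum sum_decomp card_setI_sum big_distrr -sum_nat_const.
rewrite -big_split /=; apply: eq_bigr => w Ww.
rewrite inE -(count_plane_form_zeros (herm_self_frob w) (herm_self_frob u)).
by apply: eq_bigr => a _; apply: eq_bigr => b _; rewrite herm_join_self.
Qed.

Lemma card_isotropic_orth :
  #|isotropic n :&: orth x| = (q ^ 2 * #|isotropic n :&: W|)%N.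
Proof.
have -> : isotropic n :&: orth x = [set v | (herm q v v == 0) && (herm q v x == 0)].
  by apply/setP => v; rewrite !inE.
rewrite card_set_sum sum_decomp card_setI_sum big_distrr; apply: eq_bigr => w Ww.
transitivity (\sum_(a : F) (w \in isotropic n : nat))%N.
  apply: eq_bigr => a _.
  rewrite (bigD1 0) //= big1 => [|b b0]; last by rewrite herm_join_x // (negbTE b0) andbF.
  by rewrite herm_join_self // herm_join_x //= frob0 !(mulr0, mul0r, addr0) inE eqxx andbT addn0.
by rewrite sum_nat_const card_F.
Qed.
End Decomposition.

Lemma exists_herm_eq1 n (x : 'rV[F]_n) : x != 0 -> exists u, herm q u x = 1.
Proof.
move=> x0; have [i xi0] : exists i, x 0 i != 0.
  apply/existsP; apply: contraNT x0 => /existsPn x_eq0.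
  by apply/eqP/rowP => i; rewrite mxE; apply/eqP/negPn.
exists (\row_k (if k == i then (x 0 i ^+ q)^-1 else 0)).
rewrite /herm (bigD1 i) //= big1 => [|k /negbTE ki]; last by rewrite mxE ki mul0r.
by rewrite mxE eqxx mulVf ?addr0 // frob_eq0.
Qed.

(* Both decompositions split the same [F^n] with the same number of isotropic
   vectors, so their [W]s have the same size and the same number of isotropic
   vectors. *)
Lemma card_isotropic_orth_eq n (x1 x2 : 'rV[F]_n) :
  x1 \in Phi F q n -> x2 \in Phi F q n ->
  #|isotropic n :&: orth x1| = #|isotropic n :&: orth x2|.
Proof.
rewrite !inE => /andP [x1_0 /eqP iso1] /andP [x2_0 /eqP iso2].
have [u1 u1_x1] := exists_herm_eq1 x1_0; have [u2 u2_x2] := exists_herm_eq1 x2_0.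
have eqW : #|orth x1 :&: orth u1| = #|orth x2 :&: orth u2|.
  apply/eqP; rewrite -(@eqn_pmul2r (q ^ 4)) ?expn_gt0 ?(ltnW q_gt1) //.
  by rewrite -(card_rV_decomp iso1 u1_x1) -(card_rV_decomp iso2 u2_x2).
rewrite (card_isotropic_orth iso1 u1_x1) (card_isotropic_orth iso2 u2_x2); apply/eqP.
rewrite -(eqn_add2r (#|orth x1 :&: orth u1| * ((q ^ 2 - 1) * q))).
by rewrite -(card_isotropic_decomp iso1 u1_x1) eqW -(card_isotropic_decomp iso2 u2_x2).
Qed.

Lemma herm_row_mx m1 m2 (a c : 'rV[F]_m1) (b d : 'rV[F]_m2) :
  herm q (row_mx a b) (row_mx c d) = herm q a c + herm q b d.
Proof.
by rewrite /herm big_split_ord /=; congr (_ + _); apply: eq_bigr => i _;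
  rewrite ?row_mxEl ?row_mxEr.
Qed.

Lemma herm_rV2 (a c : 'rV[F]_2) :
  herm q a c = a 0 0 * c 0 0 ^+ q + a 0 ord_max * c 0 ord_max ^+ q.
Proof.
rewrite /herm !big_ord_recl big_ord0 addr0.
by congr (_ + a 0 _ * c 0 _ ^+ q); apply: val_inj.
Qed.

Lemma rV2_eq0 (a : 'rV[F]_2) : a 0 0 = 0 -> a 0 ord_max = 0 -> a = 0.
Proof.
move=> a0 a1; apply/rowP => -[[|[|k]] lt_k2] //; rewrite mxE.
- by rewrite -a0; congr (a 0 _); apply: val_inj.
- by rewrite -a1; congr (a 0 _); apply: val_inj.
Qed.

Section StandardPair.
Variables (m : nat) (b : F).
Hypothesis norm_b : b * b ^+ q = -1.

(* [(1, b)] is isotropic in [F^2] because [b^(q+1) = -1]. *)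
Let x0 : 'rV[F]_(2 + m) := row_mx (\row_(i < 2) if i == 0 then 1 else b) 0.
Let u0 : 'rV[F]_(2 + m) := row_mx (\row_(i < 2) if i == 0 then 1 else 0) 0.

Lemma std_isotropic : x0 \in Phi F q (2 + m).
Proof.
rewrite !inE herm_row_mx herm0r addr0 herm_rV2 !mxE /= expr1n mulr1 norm_b subrr eqxx.
rewrite andbT; apply: contraNneq (@oner_neq0 F).
by move=> /rowP /(_ (lshift m 0)); rewrite row_mxEl !mxE eqxx => ->.
Qed.

Lemma std_herm : herm q u0 x0 = 1.
Proof. by rewrite herm_row_mx herm0r addr0 herm_rV2 !mxE /= expr1n mulr1 mul0r addr0. Qed.

Lemma std_orth (w : 'rV[F]_(2 + m)) :
  w \in orth x0 :&: orth u0 -> w = row_mx 0 (rsubmx w).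
Proof.
rewrite -{1}(hsubmxK w) !inE !herm_row_mx !herm0r !addr0 !herm_rV2 !mxE /=.
rewrite expr1n frob0 !mulr1 !mulr0 addr0 => /andP [/eqP w0b /eqP w0].
rewrite w0 add0r in w0b; move/eqP: w0b; rewrite mulf_eq0 frob_eq0.
have b0 : b != 0 by apply: contra_eq_neq norm_b => ->; rewrite mul0r eq_sym oppr_eq0 oner_eq0.
rewrite (negbTE b0) orbF => /eqP w1.
have l0 : lsubmx w = 0 by apply: rV2_eq0; rewrite mxE.
by rewrite -[LHS]hsubmxK l0.
Qed.

Lemma card_isotropic_std :
  #|isotropic (2 + m) :&: (orth x0 :&: orth u0)| = #|isotropic m|.
Proof.
have inj_pad : injective (@row_mx F 1 2 m 0) by move=> v1 v2 /eq_row_mx [].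
rewrite -(card_imset _ inj_pad); apply: eq_card => w; apply/idP/imsetP.
  move=> /setIP [iso_w /std_orth w_pad]; exists (rsubmx w) => //.
  by move: iso_w; rewrite {1}w_pad !inE herm_row_mx herm0r add0r.
move=> [v iso_v ->]; rewrite !inE !herm_row_mx !herm0l !herm0r !add0r.
by move: iso_v; rewrite inE => ->; rewrite !eqxx.
Qed.

Lemma card_isotropic_orth_Phi (x : 'rV[F]_(2 + m)) : x \in Phi F q (2 + m) ->
  #|isotropic (2 + m) :&: orth x| = (q ^ 2 * #|isotropic m|)%N.
Proof.
move=> xP; have := std_isotropic; rewrite inE => /andP [_ /eqP iso_x0].
by rewrite (card_isotropic_orth_eq xP std_isotropic) (card_isotropic_orth iso_x0 std_herm)
  card_isotropic_std.
Qed.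
End StandardPair.

Lemma card_isotropic n : #|isotropic n| = #|Phi F q n|.+1.
Proof.
rewrite (cardsD1 0) inE herm0l eqxx add1n; congr _.+1.
by apply: eq_card => v; rewrite !inE.
Qed.

Lemma card_span n (x : 'rV[F]_n) : x != 0 -> #|[set z : 'rV[F]_n | (z <= x)%MS]| = (q ^ 2)%N.
Proof.
move=> x0; have -> : [set z : 'rV[F]_n | (z <= x)%MS] = (fun c => c *: x) @: [set: F].
  by apply/setP => z; rewrite inE; apply/sub_rVP/imsetP => [[c ->]|[c _ ->]]; exists c.
rewrite card_in_imset ?cardsT ?card_F // => c d _ _ /eqP.
by rewrite -subr_eq0 -scalerBl scaler_eq0 (negbTE x0) orbF subr_eq0 => /eqP.
Qed.

Lemma T_neighboursE n (x : 'rV[F]_n) : x \in Phi F q n ->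
  [set z in Phi F q n | Trel q x z] = (isotropic n :&: orth x) :\: [set z : 'rV[F]_n | (z <= x)%MS].
Proof.
move=> xP; apply/setP => z; rewrite !inE /Trel xP herm_eq0C !inE /=.
case: (boolP (z <= x)%MS) => [|z_x]; first by rewrite !andbF.
have -> : z != 0 by apply: contraNneq z_x => ->; rewrite sub0mx.
by rewrite andbT; case: (herm q z z == 0).
Qed.

Lemma card_T_neighbours m (b : F) (x : 'rV[F]_(2 + m)) :
  b * b ^+ q = -1 -> x \in Phi F q (2 + m) ->
  #|[set z in Phi F q (2 + m) | Trel q x z]| = (q ^ 2 * #|Phi F q m|)%N.
Proof.
move=> norm_b xP; have := xP; rewrite inE => /andP [x0 /eqP iso_x].
have span_sub : [set z : 'rV[F]_(2 + m) | (z <= x)%MS] \subset isotropic _ :&: orth x.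
  apply/subsetP => z; rewrite !inE => /sub_rVP [c ->].
  by rewrite hermZl hermZr !hermZl iso_x !mulr0 eqxx.
rewrite T_neighboursE // cardsD (setIidPr span_sub) card_span //.
by rewrite (card_isotropic_orth_Phi norm_b xP) card_isotropic mulnS addKn.
Qed.

Lemma Trel_sym n (x z : 'rV[F]_n) : Trel q x z = Trel q z x.
Proof.
rewrite /Trel herm_eq0C; case: (boolP (x \in Phi F q n)) => [xP|_]; last by rewrite andbF.
case: (boolP (z \in Phi F q n)) => //= zP; congr (_ && ~~ _).
move: xP zP; rewrite !inE => /andP [x0 _] /andP [z0 _].
by apply/idP/idP => le; have := (mxrank_leqif_eq le).2;
  rewrite !rank_rV x0 z0 eqxx => /esym /andP [].
Qed.

Lemma TrelZr n (c : F) (x z : 'rV[F]_n) : c != 0 -> Trel q z (c *: x) = Trel q z x.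
Proof.
move=> c0; rewrite /Trel !inE scaler_eq0 hermZl !hermZr !mulf_eq0 frob_eq0.
by rewrite (negbTE c0) (eqmx_scale _ c0).
Qed.

(* Writing [-1 = alpha^i], [(-1)^(q-1) = 1] forces [q^2 - 1 | i (q - 1)], so
   [q + 1 | i] and [b = alpha^(i/(q+1))] works. *)
Lemma exists_norm_eqN1 (alpha : F) :
  (q ^ 2 - 1)%N.-primitive_root alpha -> exists b : F, b * b ^+ q = -1.
Proof.
move=> prim_alpha; have q_gt0 : (0 < q)%N by apply: ltnW.
have N1q : (-1 : F) ^+ q = -1 by rewrite frobN expr1n.
have N1_neq0 : (-1 : F) != 0 by rewrite oppr_eq0 oner_eq0.
have N1_pred : (-1 : F) ^+ q.-1 = 1.
  by apply: (mulIf N1_neq0); rewrite -exprSr prednK // N1q mul1r.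
have N1_order : (-1 : F) ^+ (q ^ 2 - 1) = 1.
  apply: (mulIf N1_neq0); rewrite -exprSr subn1 prednK ?expn_gt0 ?q_gt0 //.
  by rewrite -card_F expf_card mul1r.
have [[i _] /= N1_alpha] := prim_rootP prim_alpha N1_order.
have q1_dvd_i : (q.+1 %| i)%N.
  have : (q ^ 2 - 1 %| i * q.-1)%N.
    by rewrite (prim_order_dvd prim_alpha) exprM -N1_alpha N1_pred.
  have -> : (q ^ 2 - 1 = q.+1 * q.-1)%N by case: q q_gt0 => // k _; nia.
  by rewrite dvdn_pmul2r // -ltnS prednK.
by exists (alpha ^+ (i %/ q.+1)); rewrite -exprS -exprM divnK // -N1_alpha.
Qed.
End HermitianCounts.

Lemma exprD_pchar_power (F : finFieldType) (p k e : nat) :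
  prime p -> #|F| = (p ^ e)%N ->
  forall a b : F, (a + b) ^+ (p ^ k) = a ^+ (p ^ k) + b ^+ (p ^ k).
Proof.
move=> p_pr card_F a b; apply: exprDn_pchar.
have pF : p \in [pchar F] by apply: (card_finPcharP card_F).
by rewrite (eq_pnat _ (pcharf_eq pF)) pnatX pnat_id.
Qed.

Unset Implicit Arguments.

Theorem lemma3p2 (F : finFieldType) (q n h : nat) (alpha : F)
  (x y : 'rV[F]_n) :
  (exists p k : nat, [/\ prime p, (0 < k)%N & q = (p ^ k)%N]) ->
  #|F| = (q ^ 2)%N ->
  (q ^ 2 - 1)%N.-primitive_root alpha ->
  (4 <= n)%N ->
  (h <= q ^ 2 - 2)%N ->
  Srel q alpha h x y ->
  #|[set z in Phi F q n | Trel q x z && Trel q z y]| = (q ^ 2 * #|Phi F q (n - 2)|)%N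
  /\ (forall x0 : 'rV[F]_n, x0 \in Phi F q n ->
        #|[set z in Phi F q n | Trel q x0 z]| = (q ^ 2 * #|Phi F q (n - 2)|)%N).
Proof.
move=> [p [k [p_pr k_gt0 q_def]]] card_F prim_alpha n_ge4 _ /and3P [xP _ /eqP y_def].
have q_gt1 : (1 < q)%N by rewrite q_def -(expn0 p) ltn_exp2l ?prime_gt1.
have frobD (a b : F) : (a + b) ^+ q = a ^+ q + b ^+ q.
  by rewrite q_def (exprD_pchar_power _ p_pr (e := (k * 2)%N)) // card_F q_def expnM.
have [b norm_b] := exists_norm_eqN1 q_gt1 card_F frobD prim_alpha.
have alpha_h0 : alpha ^+ h != 0.
  by rewrite expf_neq0 // (prim_root_eq0 prim_alpha) -lt0n (prim_order_gt0 prim_alpha).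
case: n x y xP y_def n_ge4 => [|[|m]] // x y xP -> _; rewrite subn2 /=.
have neighbours := card_T_neighbours q_gt1 card_F frobD norm_b.
split; last exact: neighbours.
apply: etrans (neighbours _ x xP); apply: eq_card => z.
by rewrite !inE (TrelZr q_gt1) // (Trel_sym q_gt1 card_F frobD z) andbb.
Qed.
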